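(* Let $0<\alpha<1$, and for $0<t<1$ let $T_t$ be the weighted composition operator $T_t(f)(z)=\frac{1}{(t-1)z+1}\,f\!\left(\frac{t}{(t-1)z+1}\right)$, $z\in\mathbb D$, acting on $H^\infty_\alpha$. Put $$x_0=\frac{\alpha+2\alpha t-t-\sqrt{4\alpha^2t-2\alpha t+\alpha^2-2\alpha+1}}{2\alpha-1}.$$ Then $$\|T_t\|_{H^\infty_\alpha\to H^\infty_\alpha}=\begin{cases}\dfrac{t^{\alpha-1}}{(1-t)^\alpha} & \text{if } 0<\alpha\le 2/3,\ 0<t<1,\ \text{or if } 2/3<\alpha<1,\ \frac{3\alpha-2}{4\alpha-2}\le t<1,\\[2mm] (1-x_0)^{2\alpha-1}\left(\dfrac{1-\left|\frac{x_0}{1-t}\right|^2}{(1-x_0)^2-t^2}\right)^{\alpha} & \text{if } 2/3<\alpha<1,\ 0<t<\frac{3\alpha-2}{4\alpha-2}.\end{cases}$$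
   Context: $\mathbb D$ is the open unit disc of $\mathbb C$. For $0<\alpha<1$, the Korenblum space is $H^\infty_\alpha=\{f \text{ analytic on } \mathbb D: \|f\|_{H^\infty_\alpha}=\sup_{z\in\mathbb D}(1-|z|^2)^\alpha|f(z)|<\infty\}$, and $\|T\|_{H^\infty_\alpha\to H^\infty_\alpha}$ denotes the operator norm. *)

From Stdlib Require Import Reals.
From Coquelicot Require Import Coquelicot.
Open Scope R_scope.

Definition in_disc (z : C) : Prop := Cmod z < 1.

Definition analytic_on_disc (f : C -> C) : Prop :=
  forall z : C, in_disc z -> @ex_derive C_AbsRing C_NormedModule f z.

Definition kor_norm (alpha : R) (f : C -> C) : Rbar :=
  Lub_Rbar (fun r => exists z : C, in_disc z /\
     r = Rpower (1 - (Cmod z) ^ 2) alpha * Cmod (f z)).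

Definition in_Korenblum (alpha : R) (f : C -> C) : Prop :=
  analytic_on_disc f /\ is_finite (kor_norm alpha f).

Definition op_norm_Korenblum (alpha : R) (T : (C -> C) -> (C -> C)) : Rbar :=
  Lub_Rbar (fun r => exists f : C -> C, in_Korenblum alpha f /\
     Rbar_le (kor_norm alpha f) (Finite 1) /\ Finite r = kor_norm alpha (T f)).

Definition Tt (t : R) (f : C -> C) : C -> C :=
  fun z => Cmult (Cinv (Cplus (Cmult (RtoC (t - 1)) z) (RtoC 1)))
                 (f (Cdiv (RtoC t) (Cplus (Cmult (RtoC (t - 1)) z) (RtoC 1)))).

Definition x0 (alpha t : R) : R :=
  (alpha + 2 * alpha * t - t
   - sqrt (4 * alpha ^ 2 * t - 2 * alpha * t + alpha ^ 2 - 2 * alpha + 1))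
  / (2 * alpha - 1).

From Stdlib Require Import Reals Lra Psatz.
From Coquelicot Require Import Coquelicot.
Open Scope R_scope.

(* Put w = (t-1) z + 1 and r = |w|.  Then t < r < 2 - t, |t/w| = t/r and
   1 - |z|^2 <= (r-t)(2-t-r)/(1-t)^2, so for every f in the unit ball of H^infty_alpha
     (1-|z|^2)^alpha |T_t f(z)| <= ((r-t)(2-t-r)/(1-t)^2)^alpha / (r (1 - t^2/r^2)^alpha) =: G(r),
   with equality at the real point z = (1-r)/(1-t) for the extremal function
   f_b(u) = (1-b^2)^alpha (1-bu)^(-2alpha), b = t/r.  Hence ||T_t|| = sup_{t<r<2-t} G(r).
   The logarithmic derivative of G has the sign of the quadratic
     q(r) = (2alpha-1)(2-t-r)(r+t) - 2alpha r,   q(t) = 2t(3alpha-2-(4alpha-2)t).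
   In the first case q <= 0 on [t, 2-t), so the supremum is the limit
   G(t) = t^(alpha-1)/(1-t)^alpha; in the second q(t) > 0 and q changes sign once, at its
   root r = 1 - x0, where G is maximal. *)

(** * Elementary estimates on the real line *)

Lemma MVT_is_derive (f df : R -> R) (x y : R) :
  (forall c, Rmin x y <= c <= Rmax x y -> is_derive f c (df c)) ->
  exists c, Rmin x y <= c <= Rmax x y /\ f y - f x = df c * (y - x).
Proof.
  intros Hf. apply MVT_gen.
  - intros c Hc. apply Hf. lra.
  - intros c Hc. apply continuity_pt_filterlim, (@ex_derive_continuous R_AbsRing R_NormedModule).
    exists (df c). apply Hf, Hc.
Qed.

Lemma MVT_Rabs_le (f df : R -> R) (K x y : R) :
  (forall c, Rmin x y <= c <= Rmax x y -> is_derive f c (df c) /\ Rabs (df c) <= K) ->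
  Rabs (f y - f x) <= K * Rabs (y - x).
Proof.
  intros Hf. destruct (MVT_is_derive f df x y) as [c [Hc ->]]; [apply Hf|].
  rewrite Rabs_mult. apply Rmult_le_compat_r; [apply Rabs_pos | apply Hf, Hc].
Qed.

Lemma exp_le_compat x y : x <= y -> exp x <= exp y.
Proof. intros [H | ->]; [left; apply exp_increasing, H | lra]. Qed.

Lemma Rabs_sin_sub_le b : Rabs b <= 1/2 -> Rabs (sin b - b) <= b ^ 2.
Proof.
  assert (Hpos : forall c, 0 <= c <= 1/2 -> Rabs (sin c - c) <= c ^ 2).
  { intros c Hc. pose proof PI2_3_2.
    assert (Hlo : c - c ^ 3 / 6 <= sin c).
    { destruct (sin_bound c 0 ltac:(lra) ltac:(lra)) as [H' _].
      unfold sin_approx, sin_term in H'; simpl in H'. lra. }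
    assert (Hhi : sin c <= c).
    { destruct (Req_dec c 0) as [->|Hc0]; [rewrite sin_0; lra|].
      left; apply sin_lt_x; lra. }
    rewrite Rabs_left1; nra. }
  intros Hb. destruct (Rle_or_lt 0 b) as [H|H].
  - apply Hpos. apply Rabs_le_between in Hb. lra.
  - replace (sin b - b) with (- (sin (- b) - - b)) by (rewrite sin_neg; ring).
    rewrite Rabs_Ropp. replace (b ^ 2) with ((- b) ^ 2) by ring.
    apply Hpos. rewrite Rabs_left in Hb; lra.
Qed.

Lemma Rabs_cos_sub1_le b : Rabs b <= 1/2 -> Rabs (cos b - 1) <= b ^ 2.
Proof.
  intros Hb. apply Rabs_le_between in Hb. pose proof PI2_3_2.
  destruct (cos_bound b 0 ltac:(lra) ltac:(lra)) as [Hlo _].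
  unfold cos_approx, cos_term in Hlo; simpl in Hlo.
  pose proof (COS_bound b) as [_ Hc1].
  rewrite Rabs_left1; nra.
Qed.

Lemma exp_sub1_bounds a : Rabs a <= 1/2 ->
  0 <= exp a - 1 - a <= 2 * a ^ 2 /\ Rabs (exp a - 1) <= 2 * Rabs a /\ exp a <= 2.
Proof.
  intros Ha. apply Rabs_le_between in Ha.
  pose proof (exp_ineq1_le a) as Hlo.
  assert (Hhi : exp a * (1 - a) <= 1).
  { pose proof (exp_ineq1_le (- a)) as H. rewrite exp_Ropp in H.
    pose proof (exp_pos a). apply (Rmult_le_compat_l (exp a)) in H; [|lra].
    rewrite Rinv_r in H by lra. lra. }
  assert (Hq : exp a - 1 - a <= 2 * a ^ 2) by nra.
  split; [lra|]. split; [|nra].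
  unfold Rabs; destruct (Rcase_abs (exp a - 1)), (Rcase_abs a); nra.
Qed.

Lemma Rabs_atan_sub_le u w : Rabs (atan w - atan u) <= Rabs (w - u).
Proof.
  rewrite <- (Rmult_1_l (Rabs (w - u))).
  apply (MVT_Rabs_le atan (fun c => / (1 + c²))). intros c _. split; [apply is_derive_atan|].
  pose proof (Rle_0_sqr c). rewrite Rabs_pos_eq by (left; apply Rinv_0_lt_compat; lra).
  rewrite <- Rinv_1. apply Rinv_le_contravar; lra.
Qed.

Lemma Rabs_ln_sub_le r s : 0 < r -> r / 2 <= s -> Rabs (ln s - ln r) <= 2 / r * Rabs (s - r).
Proof.
  intros Hr Hs. apply (MVT_Rabs_le ln Rinv). intros c Hc.
  assert (Hc2 : r / 2 <= c) by (destruct Hc as [Hc _]; unfold Rmin in Hc; destruct Rle_dec; lra).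
  split; [apply is_derive_ln; lra|].
  rewrite Rabs_pos_eq by (left; apply Rinv_0_lt_compat; lra).
  replace (2 / r) with (/ (r / 2)) by (field; lra). apply Rinv_le_contravar; lra.
Qed.

(** * Complex exponential and logarithm *)

Local Notation C_AbsNM := (AbsRing_NormedModule C_AbsRing).

Lemma Rabs_Re_Im_le (z : C) : Rabs (Re z) <= Cmod z /\ Rabs (Im z) <= Cmod z.
Proof.
  pose proof (Rmax_Cmod z) as H.
  split; eapply Rle_trans; [apply Rmax_l| | apply Rmax_r|]; exact H.
Qed.

Lemma Cmod_le_Rabs_Re_Im (z : C) : Cmod z <= Rabs (Re z) + Rabs (Im z).
Proof.
  destruct z as [x y]. unfold Cmod, Re, Im; cbn [fst snd].
  pose proof (Rabs_pos x); pose proof (Rabs_pos y).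
  rewrite <- (sqrt_pow2 (Rabs x + Rabs y)) by lra. apply sqrt_le_1_alt.
  rewrite <- (pow2_abs x), <- (pow2_abs y). nra.
Qed.

Lemma Rabs_Cmod_sub_le (u v : C) : Rabs (Cmod u - Cmod v) <= Cmod (u - v).
Proof.
  pose proof (Cmod_triangle (u - v) v) as H1. pose proof (Cmod_triangle (v - u) u) as H2.
  replace (u - v + v)%C with u in H1 by ring. replace (v - u + u)%C with v in H2 by ring.
  replace (v - u)%C with (- (u - v))%C in H2 by ring. rewrite Cmod_opp in H2.
  unfold Rabs; destruct Rcase_abs; lra.
Qed.

Lemma Cmod_pos_of_Re_pos (v : C) : 0 < Re v -> 0 < Cmod v.
Proof. intros H. pose proof (proj1 (Rabs_Re_Im_le v)). pose proof (Rle_abs (Re v)). lra. Qed.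

Definition cexp (z : C) : C := (exp (Re z) * cos (Im z), exp (Re z) * sin (Im z)).

Lemma cexp_add (u v : C) : cexp (u + v) = (cexp u * cexp v)%C.
Proof.
  destruct u as [a b], v as [c d]. unfold cexp, Cplus, Cmult, Re, Im; simpl.
  rewrite exp_plus, cos_plus, sin_plus. f_equal; ring.
Qed.

Lemma Cmod_cexp (z : C) : Cmod (cexp z) = exp (Re z).
Proof.
  destruct z as [a b]. unfold Cmod, cexp, Re, Im; cbn [fst snd].
  pose proof (sin2_cos2 b) as E. unfold Rsqr in E.
  replace ((exp a * cos b) ^ 2 + (exp a * sin b) ^ 2)
    with (exp a ^ 2 * (sin b * sin b + cos b * cos b)) by ring.
  rewrite E, Rmult_1_r. apply sqrt_pow2. left; apply exp_pos.
Qed.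

Lemma Cmod_cexp_sub1_sub_le (h : C) : Cmod h <= 1/2 -> Cmod (cexp h - 1 - h) <= 5 * Cmod h ^ 2.
Proof.
  intros Hh. destruct (Rabs_Re_Im_le h) as [Ha Hb].
  rewrite Cmod2_alt. destruct h as [a b]. unfold Re, Im in *; cbn [fst snd] in *.
  destruct (exp_sub1_bounds a ltac:(lra)) as [Ea [Ea1 Ea2]].
  pose proof (Rabs_cos_sub1_le b ltac:(lra)) as Cb. pose proof (Rabs_sin_sub_le b ltac:(lra)) as Sb.
  pose proof (exp_pos a).
  eapply Rle_trans; [apply Cmod_le_Rabs_Re_Im|].
  replace (Re (cexp (a, b) - 1 - (a, b))) with (exp a * (cos b - 1) + (exp a - 1 - a))
    by (unfold cexp, Re; simpl; ring).
  replace (Im (cexp (a, b) - 1 - (a, b))) with (exp a * (sin b - b) + b * (exp a - 1))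
    by (unfold cexp, Im; simpl; ring).
  eapply Rle_trans; [apply Rplus_le_compat; apply Rabs_triang|].
  rewrite !Rabs_mult, (Rabs_pos_eq (exp a)), (Rabs_pos_eq (exp a - 1 - a)) by lra.
  assert (Rabs b * Rabs (exp a - 1) <= Rabs b * (2 * Rabs a))
    by (apply Rmult_le_compat_l; [apply Rabs_pos | exact Ea1]).
  assert (2 * (Rabs b * Rabs a) <= a ^ 2 + b ^ 2).
  { rewrite <- (pow2_abs a), <- (pow2_abs b). pose proof (pow2_ge_0 (Rabs a - Rabs b)). nra. }
  assert (exp a * Rabs (cos b - 1) <= 2 * b ^ 2)
    by (apply Rmult_le_compat; try lra; apply Rabs_pos).
  assert (exp a * Rabs (sin b - b) <= 2 * b ^ 2)
    by (apply Rmult_le_compat; try lra; apply Rabs_pos).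
  nra.
Qed.

(* The principal logarithm; it is only used on the half plane [0 < Re v]. *)
Definition clog (v : C) : C := (ln (Cmod v), atan (Im v / Re v)).

Lemma cexp_clog (v : C) : 0 < Re v -> cexp (clog v) = v.
Proof.
  intros H. pose proof (Cmod_pos_of_Re_pos v H) as Hm.
  destruct v as [x y]. unfold Re, Im in *; cbn [fst snd] in *.
  unfold cexp, clog, Re, Im; cbn [fst snd].
  rewrite exp_ln, cos_atan, sin_atan by exact Hm.
  assert (E : sqrt (1 + (y / x)²) = Cmod (x, y) / x).
  { unfold Cmod; cbn [fst snd].
    replace (x ^ 2 + y ^ 2) with (x² * (1 + (y / x)²)) by (unfold Rsqr; field; lra).
    rewrite sqrt_mult_alt, sqrt_Rsqr by (try apply Rle_0_sqr; lra). field. lra. }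
  rewrite E. f_equal; field; split; lra.
Qed.

Lemma clog_locally_lipschitz (v : C) : 0 < Re v -> exists K, 0 < K /\
  forall h : C, Cmod h <= Re v / 2 -> Cmod (clog (v + h) - clog v) <= K * Cmod h.
Proof.
  intros Hv. pose proof (Cmod_pos_of_Re_pos v Hv) as Hm.
  destruct v as [x y]. unfold Re, Im in *; cbn [fst snd] in *.
  exists (2 / Cmod (x, y) + 2 * (x + Rabs y) / x ^ 2). split.
  { pose proof (Rabs_pos y). apply Rplus_lt_le_0_compat; [apply Rdiv_lt_0_compat; lra|].
    apply Rmult_le_pos; [lra|]. left; apply Rinv_0_lt_compat; nra. }
  intros h Hh. destruct (Rabs_Re_Im_le h) as [Ha Hb].
  destruct h as [a b]. unfold Re, Im in *; cbn [fst snd] in *.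
  pose proof (proj1 (Rabs_Re_Im_le (x, y))) as Hx. unfold Re in Hx; cbn [fst] in Hx.
  rewrite Rabs_pos_eq in Hx by lra.
  pose proof (Rabs_pos y). pose proof (Rle_abs (- a)). rewrite Rabs_Ropp in *.
  change ((x, y) + (a, b))%C with (x + a, y + b).
  eapply Rle_trans; [apply Cmod_le_Rabs_Re_Im|]. unfold clog, Re, Im; cbn [fst snd].
  rewrite Rmult_plus_distr_r. apply Rplus_le_compat.
  - assert (Hd : Rabs (Cmod (x + a, y + b) - Cmod (x, y)) <= Cmod (a, b)).
    { replace (a, b) with (Cminus (x + a, y + b) (x, y))
        by (unfold Cminus, Cplus, Copp; cbn; f_equal; ring).
      apply Rabs_Cmod_sub_le. }
    eapply Rle_trans; [apply Rabs_ln_sub_le; [lra|]|].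
    + apply Rabs_le_between in Hd. lra.
    + apply Rmult_le_compat_l; [|exact Hd]. apply Rlt_le, Rdiv_lt_0_compat; lra.
  - eapply Rle_trans; [apply Rabs_atan_sub_le|].
    replace ((y + b) / (x + a) - y / x) with ((b * x - y * a) / (x * (x + a))) by (field; lra).
    assert (Hnum : Rabs (b * x - y * a) <= (x + Rabs y) * Cmod (a, b)).
    { eapply Rle_trans; [apply Rabs_triang|].
      rewrite Rabs_Ropp, !Rabs_mult, (Rabs_pos_eq x) by lra. nra. }
    rewrite Rabs_div, Rabs_mult, (Rabs_pos_eq x), (Rabs_pos_eq (x + a)) by nra.
    apply Rle_trans with ((x + Rabs y) * Cmod (a, b) / (x * (x / 2))).
    + unfold Rdiv. apply Rmult_le_compat; try lra.
      * apply Rabs_pos.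
      * left. apply Rinv_0_lt_compat. nra.
      * apply Rinv_le_contravar; nra.
    + right. field. lra.
Qed.

Lemma is_derive_C_intro (f : C -> C) (z l : C) :
  (forall eps, 0 < eps -> exists d, 0 < d /\
     forall h : C, Cmod h < d -> Cmod (f (z + h)%C - f z - l * h) <= eps * Cmod h) ->
  @is_derive C_AbsRing C_AbsNM f z l.
Proof.
  intros Hf. split; [apply is_linear_scal_l|].
  intros x Hx eps.
  assert (Hzx : z = x) by exact (@is_filter_lim_locally_unique C_AbsRing C_AbsNM z x Hx).
  subst x.
  destruct (Hf eps (cond_pos eps)) as [d [Hd Hfd]].
  exists (mkposreal d Hd). intros y Hy.
  change (Cmod (y - z) < d) in Hy.
  specialize (Hfd (y - z)%C Hy).
  assert (E : forall u w : C, (u + (w - u))%C = w) by (intros; ring). rewrite E in Hfd.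
  change (Cmod (f y - f z - (y - z) * l) <= eps * Cmod (y - z)).
  rewrite Cmult_comm. exact Hfd.
Qed.

Lemma is_derive_C_quadratic (f : C -> C) (z l : C) (M d : R) : 0 < d ->
  (forall h : C, Cmod h < d -> Cmod (f (z + h)%C - f z - l * h) <= M * Cmod h ^ 2) ->
  @is_derive C_AbsRing C_AbsNM f z l.
Proof.
  intros Hd Hf. apply is_derive_C_intro. intros eps Heps.
  assert (HM : 0 < Rabs M + 1) by (pose proof (Rabs_pos M); lra).
  exists (Rmin d (eps / (Rabs M + 1))). split.
  { apply Rmin_glb_lt; [lra | apply Rdiv_lt_0_compat; lra]. }
  intros h Hh.
  pose proof (Rmin_l d (eps / (Rabs M + 1))). pose proof (Rmin_r d (eps / (Rabs M + 1))).
  pose proof (Cmod_ge_0 h). pose proof (Rle_abs M).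
  eapply Rle_trans; [apply Hf; lra|].
  assert (Hh' : Cmod h * (Rabs M + 1) <= eps).
  { assert (Hh2 : Cmod h <= eps / (Rabs M + 1)) by lra.
    apply (Rmult_le_compat_r (Rabs M + 1)) in Hh2; [|lra].
    unfold Rdiv in Hh2. rewrite Rmult_assoc, Rinv_l in Hh2 by lra. lra. }
  assert (M * Cmod h ^ 2 <= Rabs M * Cmod h ^ 2)
    by (apply Rmult_le_compat_r; [apply pow2_ge_0 | lra]).
  nra.
Qed.

Lemma is_derive_cexp (w : C) : @is_derive C_AbsRing C_AbsNM cexp w (cexp w).
Proof.
  apply (is_derive_C_quadratic _ _ _ (5 * exp (Re w)) (1/2)); [lra|]. intros h Hh.
  rewrite cexp_add.
  replace (cexp w * cexp h - cexp w - cexp w * h)%C with (cexp w * (cexp h - 1 - h))%C by ring.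
  rewrite Cmod_mult, Cmod_cexp.
  replace (5 * exp (Re w) * Cmod h ^ 2) with (exp (Re w) * (5 * Cmod h ^ 2)) by ring.
  apply Rmult_le_compat_l; [left; apply exp_pos|]. apply Cmod_cexp_sub1_sub_le. lra.
Qed.

Lemma is_derive_clog (v : C) : 0 < Re v ->
  @is_derive C_AbsRing C_AbsNM clog v (/ v)%C.
Proof.
  intros Hv. pose proof (Cmod_pos_of_Re_pos v Hv) as Hm.
  assert (Hv0 : v <> 0%C) by (intros E; rewrite E, Cmod_0 in Hm; lra).
  destruct (clog_locally_lipschitz v Hv) as [K [HK HKv]].
  apply (is_derive_C_quadratic _ _ _ (5 * K ^ 2) (Rmin (Re v / 2) (/ (2 * K)))).
  { apply Rmin_glb_lt; [lra|]. apply Rinv_0_lt_compat; lra. }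
  intros h Hh.
  pose proof (Rmin_l (Re v / 2) (/ (2 * K))). pose proof (Rmin_r (Re v / 2) (/ (2 * K))).
  pose proof (Cmod_ge_0 h).
  specialize (HKv h ltac:(lra)).
  set (k := (clog (v + h) - clog v)%C) in *.
  assert (Hvh : 0 < Re (v + h)%C).
  { destruct (Rabs_Re_Im_le h) as [Ha _]. apply Rabs_le_between in Ha.
    unfold Re in *; destruct v, h; simpl in *. lra. }
  assert (Ek : (v + h)%C = (cexp k * v)%C).
  { rewrite <- (cexp_clog v Hv) at 2. rewrite <- cexp_add. unfold k.
    replace (clog (v + h) - clog v + clog v)%C with (clog (v + h)) by ring.
    symmetry. apply cexp_clog, Hvh. }
  assert (Eh : (/ v * h)%C = (cexp k - 1)%C).
  { replace h with ((v + h) - v)%C by ring. rewrite Ek. field. exact Hv0. }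
  rewrite Eh. replace (k - (cexp k - 1))%C with (- (cexp k - 1 - k))%C by ring.
  rewrite Cmod_opp.
  assert (Hk : Cmod k <= 1 / 2).
  { assert (HKh : K * Cmod h <= K * / (2 * K)) by (apply Rmult_le_compat_l; lra).
    replace (K * / (2 * K)) with (1 / 2) in HKh by (field; lra). lra. }
  eapply Rle_trans; [apply Cmod_cexp_sub1_sub_le, Hk|].
  pose proof (Cmod_ge_0 k).
  replace (5 * K ^ 2 * Cmod h ^ 2) with (5 * (K * Cmod h) ^ 2) by ring.
  apply Rmult_le_compat_l; [lra|]. apply pow_incr. lra.
Qed.

Lemma ex_derive_C_minus (f g : C -> C) (z : C) :
  @ex_derive C_AbsRing C_AbsNM f z ->
  @ex_derive C_AbsRing C_AbsNM g z ->
  @ex_derive C_AbsRing C_AbsNM (fun u => f u - g u)%C z.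
Proof. exact (@ex_derive_minus C_AbsRing C_AbsNM f g z). Qed.

Lemma ex_derive_C_mult_l (c : C) (f : C -> C) (z : C) :
  @ex_derive C_AbsRing C_AbsNM f z ->
  @ex_derive C_AbsRing C_AbsNM (fun u => c * f u)%C z.
Proof.
  intros Hf. apply (@ex_derive_ext C_AbsRing C_AbsNM (fun u => scal (f u) c));
    [intros; apply Cmult_comm|].
  exact (@ex_derive_scal_l C_AbsRing C_AbsNM f z c Hf).
Qed.

(** * The Korenblum norm *)

Lemma kor_norm_le (a : R) (f : C -> C) (V : R) :
  (forall z, in_disc z -> Rpower (1 - Cmod z ^ 2) a * Cmod (f z) <= V) ->
  Rbar_le (kor_norm a f) V.
Proof.
  intros H. apply (proj2 (Lub_Rbar_correct _)). intros r [z [Hz ->]]. exact (H z Hz).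
Qed.

Lemma kor_norm_ge (a : R) (f : C -> C) (z : C) : in_disc z ->
  Rbar_le (Rpower (1 - Cmod z ^ 2) a * Cmod (f z)) (kor_norm a f).
Proof.
  intros Hz. apply (proj1 (Lub_Rbar_correct _)). exists z. split; [exact Hz | reflexivity].
Qed.

Lemma kor_norm_finite (a : R) (f : C -> C) (V : R) :
  (forall z, in_disc z -> Rpower (1 - Cmod z ^ 2) a * Cmod (f z) <= V) ->
  is_finite (kor_norm a f).
Proof.
  intros H. assert (H0 : in_disc (RtoC 0)) by (unfold in_disc; rewrite Cmod_0; lra).
  pose proof (kor_norm_le a f V H) as Hle. pose proof (kor_norm_ge a f _ H0) as Hge.
  destruct (kor_norm a f); simpl in *; easy.
Qed.

Lemma op_norm_Korenblum_eq (a : R) (T : (C -> C) -> (C -> C)) (V : R) :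
  (forall f, Rbar_le (kor_norm a f) 1 -> forall z, in_disc z ->
     Rpower (1 - Cmod z ^ 2) a * Cmod (T f z) <= V) ->
  (forall eps, 0 < eps -> exists f z, in_Korenblum a f /\ Rbar_le (kor_norm a f) 1 /\
     in_disc z /\ V - eps < Rpower (1 - Cmod z ^ 2) a * Cmod (T f z)) ->
  op_norm_Korenblum a T = V.
Proof.
  intros Hup Hlow. apply is_lub_Rbar_unique. split.
  - intros r [f [_ [Hf ->]]]. apply kor_norm_le, Hup, Hf.
  - assert (Hnear : forall eps, 0 < eps -> exists r, (exists f, in_Korenblum a f /\
        Rbar_le (kor_norm a f) 1 /\ Finite r = kor_norm a (T f)) /\ V - eps < r).
    { intros eps Heps. destruct (Hlow eps Heps) as [f [z [Hf [Hf1 [Hz Hv]]]]].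
      pose proof (kor_norm_finite a (T f) V (Hup f Hf1)) as Hfin.
      pose proof (kor_norm_ge a (T f) z Hz) as Hge.
      destruct (kor_norm a (T f)) as [r | | ] eqn:E; try discriminate.
      exists r. split; [exists f; auto | exact (Rlt_le_trans _ _ _ Hv Hge)]. }
    intros b Hb. destruct b as [b | | ]; simpl; trivial.
    + destruct (Rle_or_lt V b) as [H | H]; [exact H|].
      destruct (Hnear (V - b)) as [r [Hr Hvr]]; [lra|]. specialize (Hb r Hr). simpl in Hb. lra.
    + destruct (Hnear 1) as [r [Hr _]]; [lra|]. exact (Hb r Hr).
Qed.

(** * The extremal functions *)

(* [(1 - b^2)^a (1 - b u)^(-2a)], the norm-one function of H^infty_a peaking at [u = b]. *)
Definition extremal_fun (a b : R) (u : C) : C :=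
  cexp (RtoC (a * ln (1 - b ^ 2)) - RtoC (2 * a) * clog (1 - RtoC b * u))%C.

Lemma Re_one_sub_mul_pos (b : R) (u : C) : 0 <= b < 1 -> Cmod u < 1 -> 0 < Re (1 - RtoC b * u)%C.
Proof.
  intros Hb Hu. pose proof (proj1 (Rabs_Re_Im_le u)) as Ha. apply Rabs_le_between in Ha.
  destruct u as [x y]. unfold Re in *; cbn in *. nra.
Qed.

Lemma ex_derive_extremal_fun (a b : R) (u : C) : 0 <= b < 1 -> Cmod u < 1 ->
  @ex_derive C_AbsRing C_NormedModule (extremal_fun a b) u.
Proof.
  intros Hb Hu.
  assert (H : @ex_derive C_AbsRing C_AbsNM (extremal_fun a b) u).
  { apply (@ex_derive_comp C_AbsRing C_AbsNM cexp); [eexists; apply is_derive_cexp|].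
    apply ex_derive_C_minus; [apply ex_derive_const|]. apply ex_derive_C_mult_l.
    apply (@ex_derive_comp C_AbsRing C_AbsNM clog).
    - eexists. apply is_derive_clog, Re_one_sub_mul_pos; assumption.
    - apply ex_derive_C_minus; [apply ex_derive_const|]. apply ex_derive_C_mult_l, ex_derive_id. }
  (* Coquelicot's two normed-module structures on C share the norm: only linearity changes. *)
  destruct H as [l [_ Hl]]. exists l. split; [apply is_linear_scal_l | exact Hl].
Qed.

Lemma Cmod_extremal_fun (a b : R) (u : C) :
  Cmod (extremal_fun a b u) = exp (a * ln (1 - b ^ 2) - 2 * a * ln (Cmod (1 - RtoC b * u))).
Proof. unfold extremal_fun. rewrite Cmod_cexp. unfold Re, clog; simpl. f_equal. ring. Qed.

Lemma extremal_fun_weighted_le (a b : R) (u : C) : 0 < a -> 0 <= b < 1 -> Cmod u < 1 ->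
  Rpower (1 - Cmod u ^ 2) a * Cmod (extremal_fun a b u) <= 1.
Proof.
  intros Ha Hb Hu. rewrite Cmod_extremal_fun. unfold Rpower. rewrite <- exp_plus.
  apply Rle_trans with (exp 0); [apply exp_le_compat | rewrite exp_0; lra].
  pose proof (Cmod_ge_0 u).
  set (m := Cmod (1 - RtoC b * u)).
  assert (Hm : 1 - b * Cmod u <= m).
  { pose proof (Cmod_triangle (1 - RtoC b * u) (RtoC b * u)) as H1.
    replace (1 - RtoC b * u + RtoC b * u)%C with (RtoC 1) in H1 by ring.
    rewrite Cmod_1, Cmod_mult, Cmod_R, Rabs_pos_eq in H1 by lra. unfold m. lra. }
  assert (Hprod : (1 - Cmod u ^ 2) * (1 - b ^ 2) <= m ^ 2).
  { assert ((1 - b * Cmod u) ^ 2 <= m ^ 2) by (apply pow_incr; nra).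
    pose proof (pow2_ge_0 (Cmod u - b)). nra. }
  assert (Hu2 : 0 < 1 - Cmod u ^ 2) by nra.
  assert (Hb2 : 0 < 1 - b ^ 2) by nra.
  assert (Hln : ln (1 - Cmod u ^ 2) + ln (1 - b ^ 2) <= 2 * ln m).
  { rewrite <- ln_mult by lra. replace 2 with (INR 2) by (simpl; ring).
    rewrite <- ln_pow by nra. apply ln_le; [nra | exact Hprod]. }
  apply (Rmult_le_compat_l a) in Hln; lra.
Qed.

Lemma Cmod_extremal_fun_peak (a b : R) : 0 <= b < 1 ->
  Cmod (extremal_fun a b (RtoC b)) = Rpower (1 - b ^ 2) (- a).
Proof.
  intros Hb. rewrite Cmod_extremal_fun.
  replace (1 - RtoC b * RtoC b)%C with (RtoC (1 - b ^ 2))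
    by (unfold RtoC, Cminus, Cplus, Copp, Cmult; simpl; f_equal; ring).
  rewrite Cmod_R, Rabs_pos_eq by nra. unfold Rpower. f_equal. ring.
Qed.

Lemma extremal_fun_in_unit_ball (a b : R) : 0 < a -> 0 <= b < 1 ->
  in_Korenblum a (extremal_fun a b) /\ Rbar_le (kor_norm a (extremal_fun a b)) 1.
Proof.
  intros Ha Hb.
  assert (Hle : forall z, in_disc z -> Rpower (1 - Cmod z ^ 2) a * Cmod (extremal_fun a b z) <= 1)
    by (intros z Hz; apply extremal_fun_weighted_le; assumption).
  split; [split|].
  - intros z Hz. apply ex_derive_extremal_fun; assumption.
  - exact (kor_norm_finite a _ 1 Hle).
  - exact (kor_norm_le a _ 1 Hle).
Qed.

(** * The norm profile of T_t *)

Definition log_norm_profile (a t r : R) : R :=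
  (2 * a - 1) * ln r + a * (ln (2 - t - r) - ln (r + t) - 2 * ln (1 - t)).

(* [r^(2a-1) ((2-t-r) / ((1-t)^2 (r+t)))^a], the largest value of the weighted [|T_t f|]
   over the unit ball at points z with [|(t-1) z + 1| = r]. *)
Definition norm_profile (a t r : R) : R := exp (log_norm_profile a t r).

Lemma norm_profile_at_t (a t : R) : 0 < t < 1 ->
  norm_profile a t t = Rpower t (a - 1) / Rpower (1 - t) a.
Proof.
  intros Ht. unfold norm_profile, log_norm_profile, Rpower, Rdiv.
  rewrite <- exp_Ropp, <- exp_plus. f_equal.
  replace (2 - t - t) with (2 * (1 - t)) by ring. replace (t + t) with (2 * t) by ring.
  rewrite !ln_mult by lra. ring.
Qed.

Lemma norm_profile_weighted (a t r : R) : 0 < t < 1 -> t < r < 2 - t ->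
  Rpower ((r - t) * (2 - t - r) / (1 - t) ^ 2) a * (/ r * Rpower (1 - (t / r) ^ 2) (- a)) =
  norm_profile a t r.
Proof.
  intros Ht Hr. unfold norm_profile, log_norm_profile, Rpower.
  replace (/ r) with (exp (- ln r)) by (rewrite exp_Ropp, exp_ln; lra).
  rewrite <- !exp_plus. f_equal.
  replace (1 - (t / r) ^ 2) with ((r - t) * (r + t) / r ^ 2) by (field; lra).
  assert (0 < (1 - t) ^ 2) by (apply pow_lt; lra). assert (0 < r ^ 2) by (apply pow_lt; lra).
  unfold Rdiv. rewrite !ln_mult, !ln_Rinv by (try apply Rinv_0_lt_compat; nra).
  rewrite !ln_pow by lra. simpl INR. ring.
Qed.

Lemma norm_profile_Rpower (a t r : R) : 0 < t < 1 -> t < r < 2 - t ->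
  Rpower r (2 * a - 1) * Rpower ((1 - Rabs ((1 - r) / (1 - t)) ^ 2) / (r ^ 2 - t ^ 2)) a =
  norm_profile a t r.
Proof.
  intros Ht Hr. rewrite pow2_abs.
  replace ((1 - ((1 - r) / (1 - t)) ^ 2) / (r ^ 2 - t ^ 2))
    with ((2 - t - r) / ((1 - t) ^ 2 * (r + t))) by (field; split; nra).
  unfold norm_profile, log_norm_profile, Rpower. rewrite <- exp_plus. f_equal.
  assert (0 < (1 - t) ^ 2) by (apply pow_lt; lra).
  unfold Rdiv. rewrite ln_mult, ln_Rinv, ln_mult by (try apply Rinv_0_lt_compat; nra).
  rewrite ln_pow by lra. simpl INR. ring.
Qed.

Lemma Tt_denominator_bounds (t : R) (z : C) : 0 < t < 1 -> Cmod z < 1 ->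
  let r := Cmod (RtoC (t - 1) * z + 1) in
  t < r < 2 - t /\ 1 - Cmod z ^ 2 <= (r - t) * (2 - t - r) / (1 - t) ^ 2.
Proof.
  intros Ht Hz r. pose proof (Cmod_ge_0 z).
  assert (Hd : Rabs (r - 1) <= (1 - t) * Cmod z).
  { pose proof (Rabs_Cmod_sub_le (RtoC (t - 1) * z + 1) 1) as H1. rewrite Cmod_1 in H1.
    replace (RtoC (t - 1) * z + 1 - 1)%C with (RtoC (t - 1) * z)%C in H1 by ring.
    rewrite Cmod_mult, Cmod_R, (Rabs_left (t - 1)) in H1 by lra. unfold r. lra. }
  assert (Hz1 : (1 - t) * Cmod z < 1 - t) by nra.
  split; [apply Rabs_le_between in Hd; lra|].
  replace ((r - t) * (2 - t - r)) with ((1 - t) ^ 2 - (r - 1) ^ 2) by ring.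
  assert (Hsq : (r - 1) ^ 2 <= (1 - t) ^ 2 * Cmod z ^ 2).
  { rewrite <- pow2_abs, <- Rpow_mult_distr. apply pow_incr. split; [apply Rabs_pos | exact Hd]. }
  apply (Rmult_le_reg_r ((1 - t) ^ 2)); [apply pow_lt; lra|].
  unfold Rdiv. rewrite Rmult_assoc, Rinv_l by (apply pow_nonzero; lra). nra.
Qed.

Lemma Tt_weighted_le_profile (a t : R) (f : C -> C) (z : C) : 0 < a -> 0 < t < 1 ->
  Rbar_le (kor_norm a f) 1 -> in_disc z ->
  exists r, t < r < 2 - t /\ Rpower (1 - Cmod z ^ 2) a * Cmod (Tt t f z) <= norm_profile a t r.
Proof.
  intros Ha Ht Hf Hz. pose proof (Tt_denominator_bounds t z Ht Hz) as [Hr Hzr].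
  set (w := (RtoC (t - 1) * z + 1)%C) in *. set (r := Cmod w) in *.
  exists r. split; [exact Hr|].
  assert (Hw : w <> 0%C) by (intros E; unfold r in Hr; rewrite E, Cmod_0 in Hr; lra).
  assert (HTt : Cmod (Tt t f z) = / r * Cmod (f (t / w)%C)).
  { unfold Tt. fold w. rewrite Cmod_mult, Cmod_inv by exact Hw. reflexivity. }
  assert (Hphi : Cmod (t / w)%C = t / r).
  { rewrite Cmod_div by exact Hw. rewrite Cmod_R, Rabs_pos_eq by lra. reflexivity. }
  assert (Hfphi : Cmod (f (t / w)%C) <= Rpower (1 - (t / r) ^ 2) (- a)).
  { assert (Hin : in_disc (t / w)%C).
    { unfold in_disc. rewrite Hphi. apply (proj1 (Rdiv_lt_1 t r ltac:(lra))); lra. }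
    pose proof (Rbar_le_trans _ _ _ (kor_norm_ge a f _ Hin) Hf) as H1.
    change (Rpower (1 - Cmod (t / w)%C ^ 2) a * Cmod (f (t / w)%C) <= 1) in H1.
    rewrite Hphi in H1. rewrite Rpower_Ropp.
    assert (HP : 0 < Rpower (1 - (t / r) ^ 2) a) by apply exp_pos.
    apply (Rmult_le_reg_l _ _ _ HP). rewrite Rinv_r by lra. exact H1. }
  rewrite HTt, <- norm_profile_weighted by lra.
  pose proof (Cmod_ge_0 z). pose proof (Cmod_ge_0 (f (t / w)%C)).
  assert (0 < / r) by (apply Rinv_0_lt_compat; lra).
  apply Rmult_le_compat.
  - left; apply exp_pos.
  - apply Rmult_le_pos; lra.
  - apply Rle_Rpower_l; [lra | split; [unfold in_disc in Hz; nra | exact Hzr]].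
  - apply Rmult_le_compat_l; [lra | exact Hfphi].
Qed.

Lemma Tt_attains_profile (a t r : R) : 0 < a -> 0 < t < 1 -> t < r < 2 - t ->
  exists f z, in_Korenblum a f /\ Rbar_le (kor_norm a f) 1 /\ in_disc z /\
    Rpower (1 - Cmod z ^ 2) a * Cmod (Tt t f z) = norm_profile a t r.
Proof.
  intros Ha Ht Hr.
  assert (Hb : 0 <= t / r < 1).
  { split; [apply Rlt_le, Rdiv_lt_0_compat; lra | apply (proj1 (Rdiv_lt_1 t r ltac:(lra))); lra]. }
  set (x := (1 - r) / (1 - t)).
  assert (Hx : Rabs x < 1).
  { assert (Ex : x * (1 - t) = 1 - r) by (unfold x; field; lra). apply Rabs_def1; nra. }
  destruct (extremal_fun_in_unit_ball a (t / r) Ha Hb) as [Hf Hf1].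
  exists (extremal_fun a (t / r)), (RtoC x). split; [exact Hf|]. split; [exact Hf1|].
  split; [unfold in_disc; rewrite Cmod_R; exact Hx|].
  assert (Hw : (RtoC (t - 1) * RtoC x + RtoC 1)%C = RtoC r).
  { unfold x, RtoC, Cmult, Cplus; simpl. f_equal; field; lra. }
  unfold Tt. rewrite Hw.
  replace (RtoC t / RtoC r)%C with (RtoC (t / r)) by (rewrite <- RtoC_div by lra; reflexivity).
  rewrite Cmod_mult, Cmod_inv by (intros E; injection E; lra).
  rewrite Cmod_extremal_fun_peak by exact Hb.
  rewrite !Cmod_R, pow2_abs, (Rabs_pos_eq r) by lra.
  rewrite <- norm_profile_weighted by lra.
  replace (1 - x ^ 2) with ((r - t) * (2 - t - r) / (1 - t) ^ 2) by (unfold x; field; lra).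
  reflexivity.
Qed.

Lemma op_norm_Tt_eq (a t V : R) : 0 < a -> 0 < t < 1 ->
  (forall r, t < r < 2 - t -> norm_profile a t r <= V) ->
  (forall eps, 0 < eps -> exists r, t < r < 2 - t /\ V - eps < norm_profile a t r) ->
  op_norm_Korenblum a (Tt t) = V.
Proof.
  intros Ha Ht Hup Hlow. apply op_norm_Korenblum_eq.
  - intros f Hf z Hz. destruct (Tt_weighted_le_profile a t f z Ha Ht Hf Hz) as [r [Hr Hle]].
    eapply Rle_trans; [exact Hle | exact (Hup r Hr)].
  - intros eps Heps. destruct (Hlow eps Heps) as [r [Hr Hv]].
    destruct (Tt_attains_profile a t r Ha Ht Hr) as [f [z [Hf [Hf1 [Hz E]]]]].
    exists f, z. rewrite E. auto.
Qed.

(** * Maximizing the profile *)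

Definition profile_quadratic (a t r : R) : R := (2 * a - 1) * (2 - t - r) * (r + t) - 2 * a * r.

Lemma is_derive_log_norm_profile (a t r : R) : 0 < t -> 0 < r < 2 - t ->
  is_derive (log_norm_profile a t) r (profile_quadratic a t r / (r * (2 - t - r) * (r + t))).
Proof.
  intros Ht Hr. unfold log_norm_profile, profile_quadratic.
  auto_derive; [repeat split; lra|]. field. repeat split; lra.
Qed.

Lemma log_norm_profile_monotone (a t x y : R) : 0 < t -> t <= x <= y -> y < 2 - t ->
  ((forall c, x <= c <= y -> 0 <= profile_quadratic a t c) ->
     log_norm_profile a t x <= log_norm_profile a t y) /\
  ((forall c, x <= c <= y -> profile_quadratic a t c <= 0) ->
     log_norm_profile a t y <= log_norm_profile a t x).
Proof.
  intros Ht Hxy Hy.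
  destruct (MVT_is_derive (log_norm_profile a t)
             (fun r => profile_quadratic a t r / (r * (2 - t - r) * (r + t))) x y) as [c [Hc E]].
  { intros c Hc. rewrite Rmin_left, Rmax_right in Hc by lra.
    apply is_derive_log_norm_profile; lra. }
  rewrite Rmin_left, Rmax_right in Hc by lra.
  set (D := / (c * (2 - t - c) * (c + t))). unfold Rdiv in E. fold D in E.
  assert (Hd : 0 < D) by (apply Rinv_0_lt_compat; repeat apply Rmult_lt_0_compat; lra).
  split; intros Hq; specialize (Hq c Hc).
  - assert (0 <= profile_quadratic a t c * D) by (apply Rmult_le_pos; lra). nra.
  - assert (profile_quadratic a t c * D <= 0) by nra. nra.
Qed.

Lemma profile_quadratic_at_t (a t : R) :
  profile_quadratic a t t = 2 * t * (3 * a - 2 - (4 * a - 2) * t).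
Proof. unfold profile_quadratic. ring. Qed.

Lemma profile_quadratic_antitone (a t c d : R) : 1 / 2 <= a < 1 -> 0 < t -> t <= c <= d ->
  profile_quadratic a t d <= profile_quadratic a t c.
Proof.
  intros Ha Ht Hcd.
  replace (profile_quadratic a t d) with
    (profile_quadratic a t c + (d - c) * ((2 * a - 1) * (2 - 2 * t - c - d) - 2 * a))
    by (unfold profile_quadratic; ring).
  assert ((2 * a - 1) * (2 - 2 * t - c - d) <= (2 * a - 1) * 2) by (apply Rmult_le_compat_l; lra).
  nra.
Qed.

Lemma profile_quadratic_nonpos (a t c : R) : 0 < a < 1 -> 0 < t < 1 ->
  (a <= 2 / 3 \/ (2 / 3 < a /\ (3 * a - 2) / (4 * a - 2) <= t)) ->
  t <= c < 2 - t -> profile_quadratic a t c <= 0.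
Proof.
  intros Ha Ht Hcase Hc. destruct (Rle_or_lt a (1 / 2)) as [Ha2 | Ha2].
  - unfold profile_quadratic.
    assert ((2 * a - 1) * ((2 - t - c) * (c + t)) <= 0) by (apply Rmult_le_0_r; nra).
    nra.
  - apply Rle_trans with (profile_quadratic a t t); [apply profile_quadratic_antitone; lra|].
    rewrite profile_quadratic_at_t.
    assert (3 * a - 2 <= (4 * a - 2) * t).
    { destruct Hcase as [Ha3 | [Ha3 Ht3]]; [nra|].
      apply (Rmult_le_compat_l (4 * a - 2)) in Ht3; [|lra].
      replace ((4 * a - 2) * ((3 * a - 2) / (4 * a - 2))) with (3 * a - 2) in Ht3 by (field; lra).
      lra. }
    nra.
Qed.

Lemma x0_discriminant_nonneg (a t : R) : 0 < t < 1 ->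
  0 <= 4 * a ^ 2 * t - 2 * a * t + a ^ 2 - 2 * a + 1.
Proof.
  intros Ht.
  replace (4 * a ^ 2 * t - 2 * a * t + a ^ 2 - 2 * a + 1)
    with ((a - 1 + t * (1 - 2 * a)) ^ 2 + (2 * a - 1) ^ 2 * (t * (2 - t))) by ring.
  assert (0 <= (2 * a - 1) ^ 2 * (t * (2 - t))) by (apply Rmult_le_pos; [apply pow2_ge_0 | nra]).
  pose proof (pow2_ge_0 (a - 1 + t * (1 - 2 * a))). lra.
Qed.

(* In the variable [x = 1 - r], the roots of [profile_quadratic] are [x0] and this one. *)
Definition x0_conj (a t : R) : R :=
  (a + 2 * a * t - t + sqrt (4 * a ^ 2 * t - 2 * a * t + a ^ 2 - 2 * a + 1)) / (2 * a - 1).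

Lemma profile_quadratic_factor (a t r : R) : 1 / 2 < a -> 0 < t < 1 ->
  profile_quadratic a t r = - (2 * a - 1) * (r - (1 - x0 a t)) * (r - (1 - x0_conj a t)).
Proof.
  intros Ha Ht. pose proof (sqrt_sqrt _ (x0_discriminant_nonneg a t Ht)) as HS.
  unfold x0, x0_conj.
  set (S := sqrt _) in *. set (u := a + 2 * a * t - t).
  replace (- (2 * a - 1) * (r - (1 - (u - S) / (2 * a - 1))) * (r - (1 - (u + S) / (2 * a - 1))))
    with (- (((2 * a - 1) * (r - 1) + u) ^ 2 - S * S) / (2 * a - 1)) by (field; lra).
  rewrite HS. unfold profile_quadratic, u. field. lra.
Qed.

Lemma profile_quadratic_sign_change (a t : R) : 2 / 3 < a < 1 -> 0 < t < 1 ->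
  t < (3 * a - 2) / (4 * a - 2) ->
  (t < 1 - x0 a t < 2 - t) /\
  (forall c, t <= c <= 1 - x0 a t -> 0 <= profile_quadratic a t c) /\
  (forall c, 1 - x0 a t <= c -> profile_quadratic a t c <= 0).
Proof.
  intros Ha Ht Hth.
  pose proof (fun r => profile_quadratic_factor a t r ltac:(lra) Ht) as Hq.
  assert (Hroots : x0 a t <= x0_conj a t).
  { unfold x0, x0_conj. set (S := sqrt _). assert (0 <= S) by apply sqrt_pos.
    assert (0 < / (2 * a - 1)) by (apply Rinv_0_lt_compat; lra). unfold Rdiv. nra. }
  set (rho := 1 - x0 a t) in *. set (rho' := 1 - x0_conj a t) in *.
  assert (Hqt : 0 < profile_quadratic a t t).
  { rewrite profile_quadratic_at_t.
    apply (Rmult_lt_compat_l (4 * a - 2)) in Hth; [|lra].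
    replace ((4 * a - 2) * ((3 * a - 2) / (4 * a - 2))) with (3 * a - 2) in Hth by (field; lra).
    nra. }
  assert (Hq2t : profile_quadratic a t (2 - t) < 0) by (unfold profile_quadratic; nra).
  rewrite Hq in Hqt, Hq2t.
  assert (Hrr : rho' <= rho) by (unfold rho, rho'; lra).
  assert (Hprod : (t - rho) * (t - rho') < 0).
  { destruct (Rlt_or_le ((t - rho) * (t - rho')) 0) as [H | H]; [exact H|].
    assert (0 <= (2 * a - 1) * ((t - rho) * (t - rho'))) by (apply Rmult_le_pos; lra). nra. }
  assert (Ht_rho : rho' < t < rho).
  { split; destruct (Rlt_or_le rho' t), (Rlt_or_le t rho); nra. }
  assert (H2t : rho < 2 - t).
  { destruct (Rlt_or_le rho (2 - t)) as [H | H]; [exact H|].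
    assert (0 <= (2 * a - 1) * ((rho - (2 - t)) * (2 - t - rho'))).
    { apply Rmult_le_pos; [|apply Rmult_le_pos]; lra. }
    nra. }
  split; [lra|]. split; intros c Hc; rewrite Hq.
  - replace (- (2 * a - 1) * (c - rho) * (c - rho'))
      with ((2 * a - 1) * ((rho - c) * (c - rho'))) by ring.
    apply Rmult_le_pos; [|apply Rmult_le_pos]; lra.
  - replace (- (2 * a - 1) * (c - rho) * (c - rho'))
      with (- ((2 * a - 1) * ((c - rho) * (c - rho')))) by ring.
    assert (0 <= (2 * a - 1) * ((c - rho) * (c - rho')))
      by (apply Rmult_le_pos; [|apply Rmult_le_pos]; lra).
    lra.
Qed.

Lemma norm_profile_le_at_t (a t r : R) : 0 < a < 1 -> 0 < t < 1 ->
  (a <= 2 / 3 \/ (2 / 3 < a /\ (3 * a - 2) / (4 * a - 2) <= t)) ->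
  t < r < 2 - t -> norm_profile a t r <= norm_profile a t t.
Proof.
  intros Ha Ht Hcase Hr. apply exp_le_compat.
  apply (log_norm_profile_monotone a t t r); try lra.
  intros c Hc. apply profile_quadratic_nonpos; auto; lra.
Qed.

Lemma norm_profile_le_at_root (a t r : R) : 2 / 3 < a < 1 -> 0 < t < 1 ->
  t < (3 * a - 2) / (4 * a - 2) ->
  t < r < 2 - t -> norm_profile a t r <= norm_profile a t (1 - x0 a t).
Proof.
  intros Ha Ht Hth Hr. apply exp_le_compat.
  destruct (profile_quadratic_sign_change a t Ha Ht Hth) as [Hrho [Hpos Hneg]].
  destruct (Rle_or_lt r (1 - x0 a t)).
  - apply (log_norm_profile_monotone a t r (1 - x0 a t)); try lra.
    intros c Hc. apply Hpos. lra.
  - apply (log_norm_profile_monotone a t (1 - x0 a t) r); try lra.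
    intros c Hc. apply Hneg. lra.
Qed.

Lemma norm_profile_right_limit (a t eps : R) : 0 < t < 1 -> 0 < eps ->
  exists r, t < r < 2 - t /\ norm_profile a t t - eps < norm_profile a t r.
Proof.
  intros Ht Heps.
  assert (Hc : continuous (norm_profile a t) t).
  { apply (@ex_derive_continuous R_AbsRing R_NormedModule).
    unfold norm_profile, log_norm_profile. auto_derive. repeat split; lra. }
  apply filterlim_locally with (eps := mkposreal eps Heps) in Hc. destruct Hc as [d Hd].
  set (r := t + Rmin (d / 2) ((1 - t) / 2)).
  assert (Hm : 0 < Rmin (d / 2) ((1 - t) / 2)) by (apply Rmin_glb_lt; pose proof (cond_pos d); lra).
  pose proof (Rmin_l (d / 2) ((1 - t) / 2)). pose proof (Rmin_r (d / 2) ((1 - t) / 2)).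
  exists r. split; [unfold r; lra|].
  assert (Hball : ball t d r).
  { change (Rabs (r - t) < d). unfold r. rewrite Rabs_pos_eq; pose proof (cond_pos d); lra. }
  specialize (Hd r Hball). change (Rabs (norm_profile a t r - norm_profile a t t) < eps) in Hd.
  apply Rabs_def2 in Hd. lra.
Qed.

Theorem mainTheorem2 (alpha t : R) (ha0 : 0 < alpha) (ha1 : alpha < 1)
  (ht0 : 0 < t) (ht1 : t < 1) :
  ((alpha <= 2 / 3 \/ (2 / 3 < alpha /\ (3 * alpha - 2) / (4 * alpha - 2) <= t)) ->
     op_norm_Korenblum alpha (Tt t) =
       Finite (Rpower t (alpha - 1) / Rpower (1 - t) alpha)) /\
  ((2 / 3 < alpha /\ t < (3 * alpha - 2) / (4 * alpha - 2)) ->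
     op_norm_Korenblum alpha (Tt t) =
       Finite (Rpower (1 - x0 alpha t) (2 * alpha - 1) *
               Rpower ((1 - (Rabs (x0 alpha t / (1 - t))) ^ 2)
                       / ((1 - x0 alpha t) ^ 2 - t ^ 2)) alpha)).
Proof.
  assert (Ht : 0 < t < 1) by lra.
  split.
  - intros Hcase. rewrite <- norm_profile_at_t by exact Ht.
    apply op_norm_Tt_eq; try lra.
    + intros r Hr. apply norm_profile_le_at_t; auto; lra.
    + intros eps Heps. apply norm_profile_right_limit; assumption.
  - intros [Ha Hth].
    destruct (profile_quadratic_sign_change alpha t ltac:(lra) Ht Hth) as [Hroot _].
    replace (x0 alpha t) with (1 - (1 - x0 alpha t)) at 2 by ring.
    rewrite norm_profile_Rpower by lra.
    apply op_norm_Tt_eq; try lra.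
    + intros r Hr. apply norm_profile_le_at_root; auto; lra.
    + intros eps Heps. exists (1 - x0 alpha t). split; [exact Hroot | lra].
Qed.
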